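(* Let $t$, $u$ be two terms of type $A$ in context $\Gamma$ of $\mathrm{IK}_C$. If for all Cartesian closed categories $\mathcal{M}$ equipped with an adjunction it is the case that $[\![t]\!] = [\![u]\!] : \mathcal{M}([\![\Gamma]\!],[\![A]\!])$, then $t \equiv u$ in context $\Gamma$ at type $A$.
   Context: $\mathrm{IK}_C$ is the Fitch-style calculus with types $A ::= \iota\mid A\to B\mid\Box A$ and contexts $\Gamma::=\cdot\mid\Gamma,A\mid\Gamma,\mathsf{lock}$ ($\mathsf{lock}$ the context lock); $\Delta\mathrel{R}\Gamma$ holds when $\Gamma=\Delta,\mathsf{lock},\Delta'$ with $\Delta'$ lock-free. Terms: STLC plus $\mathsf{box}\,t:\Box A$ in $\Gamma$ from $t:A$ in $\Gamma,\mathsf{lock}$, and $\mathsf{unbox}(t,e):A$ in $\Gamma$ from $t:\Box A$ in $\Delta$ and $e:\Delta\mathrel{R}\Gamma$. Equational theory: function $\beta,\eta$; $\mathsf{unbox}(\mathsf{box}\,t,e)\equiv\mathit{wk}(\mathit{factor}(e),t)$; $t\equiv\mathsf{box}(\mathsf{unbox}(t,\mathit{nil}))$. Terms are interpreted in a CCC with an adjunction $\mathsf{lock}\dashv\Box$ by interpreting $\Box$, $\mathsf{lock}$ as right/left adjoint and $\mathsf{box}$/$\mathsf{unbox}$ via the adjuncts (Clouston's semantics). *)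

Set Implicit Arguments.

Inductive Ty : Type :=
| iota : Ty
| arr : Ty -> Ty -> Ty
| box : Ty -> Ty.

Inductive Ctx : Type :=
| cnil : Ctx
| cext : Ctx -> Ty -> Ctx
| clock : Ctx -> Ctx.

(** Variables: only from the lock-free suffix of the context. *)
Inductive Var : Ctx -> Ty -> Type :=
| vz : forall G A, Var (cext G A) A
| vs : forall G A B, Var G A -> Var (cext G B) A.

(** [Rel D G] : witnesses  D R G, i.e. G = D, lock, D'  with D' lock-free. *)
Inductive Rel (D : Ctx) : Ctx -> Type :=
| r_nil : Rel D (clock D)
| r_ext : forall G A, Rel D G -> Rel D (cext G A).

Inductive Tm : Ctx -> Ty -> Type :=
| var : forall G A, Var G A -> Tm G A
| lam : forall G A B, Tm (cext G A) B -> Tm G (arr A B)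
| app : forall G A B, Tm G (arr A B) -> Tm G A -> Tm G B
| tbox : forall G A, Tm (clock G) A -> Tm G (box A)
| unbox : forall D G A, Tm D (box A) -> Rel D G -> Tm G A.

(** * Weakenings (order-preserving embeddings) [Wk G G'] : G ⊆ G' *)
Inductive Wk : Ctx -> Ctx -> Type :=
| wbase : Wk cnil cnil
| wdrop : forall G G' A, Wk G G' -> Wk G (cext G' A)
| wkeep : forall G G' A, Wk G G' -> Wk (cext G A) (cext G' A)
| wkeepL : forall G G', Wk G G' -> Wk (clock G) (clock G').

Fixpoint idWk (G : Ctx) : Wk G G :=
  match G with
  | cnil => wbase
  | cext G A => wkeep A (idWk G)
  | clock G => wkeepL (idWk G)
  end.

Fixpoint factor D G (e : Rel D G) : Wk (clock D) G :=
  match e in Rel _ G return Wk (clock D) G with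
  | r_nil _ => wkeepL (idWk D)
  | r_ext A e0 => wdrop A (factor e0)
  end.

Definition relNilInv D (e : Rel D cnil) : False :=
  match e in Rel _ H return match H with cnil => False | _ => True end with
  | r_nil _ => I
  | r_ext _ _ => I
  end.

Definition relExtInv D G A (e : Rel D (cext G A)) : Rel D G :=
  match e in Rel _ H return match H with cext H0 _ => Rel D H0 | _ => unit end with
  | r_nil _ => tt
  | r_ext _ e0 => e0
  end.

Definition relLockInv D G (e : Rel D (clock G)) : D = G :=
  match e in Rel _ H return match H with clock H0 => D = H0 | _ => True end with
  | r_nil _ => eq_refl
  | r_ext _ _ => I
  end.

Definition varNilInv A (x : Var cnil A) : False :=
  match x in Var H _ return match H with cnil => False | _ => True end with
  | vz _ _ => I
  | vs _ _ => I
  end.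

Definition varLockInv G A (x : Var (clock G) A) : False :=
  match x in Var H _ return match H with clock _ => False | _ => True end with
  | vz _ _ => I
  | vs _ _ => I
  end.

Fixpoint wkVar G G' (w : Wk G G') {struct w} : forall A, Var G A -> Var G' A :=
  match w in Wk G G' return forall A, Var G A -> Var G' A with
  | wbase => fun A x => False_rect _ (varNilInv x)
  | wdrop B w0 => fun A x => vs B (wkVar w0 x)
  | @wkeep G0 G0' C w0 => fun A x =>
      match x in Var H B
      return match H with
             | cext H0 C' => (forall B', Var H0 B' -> Var G0' B') -> Var (cext G0' C') B
             | _ => unit
             end with
      | vz _ _ => fun _ => vz _ _
      | vs C' x0 => fun rec => vs C' (rec _ x0)
      end (wkVar w0)
  | wkeepL w0 => fun A x => False_rect _ (varLockInv x)
  end.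

Fixpoint factorWk G G' (w : Wk G G') {struct w}
  : forall D, Rel D G -> {D' : Ctx & (Wk D D' * Rel D' G')%type} :=
  match w in Wk G G' return forall D, Rel D G -> {D' : Ctx & (Wk D D' * Rel D' G')%type} with
  | wbase => fun D e => False_rect _ (relNilInv e)
  | wdrop A w0 => fun D e =>
      let (D', p) := factorWk w0 e in
      existT _ D' (fst p, r_ext A (snd p))
  | wkeep A w0 => fun D e =>
      let (D', p) := factorWk w0 (relExtInv e) in
      existT _ D' (fst p, r_ext A (snd p))
  | @wkeepL G0 G0' w0 => fun D e =>
      existT _ G0' (eq_rect G0 (fun X => Wk X G0') w0 D (eq_sym (relLockInv e)),
                    r_nil G0')
  end.

Fixpoint wkTm G A (t : Tm G A) {struct t} : forall G', Wk G G' -> Tm G' A :=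
  match t in Tm G A return forall G', Wk G G' -> Tm G' A with
  | var x => fun G' w => var (wkVar w x)
  | lam t0 => fun G' w => lam (wkTm t0 (wkeep _ w))
  | app t1 t2 => fun G' w => app (wkTm t1 w) (wkTm t2 w)
  | tbox t0 => fun G' w => tbox (wkTm t0 (wkeepL w))
  | unbox t0 e => fun G' w =>
      let (D', p) := factorWk w e in unbox (wkTm t0 (fst p)) (snd p)
  end.

(** * Substitutions [Sub D G] : a term in D for every variable of G *)
Inductive Sub : Ctx -> Ctx -> Type :=
| snil : forall D, Sub D cnil
| sext : forall D G A, Sub D G -> Tm D A -> Sub D (cext G A)
| slock : forall D D' G, Sub D G -> Rel D D' -> Sub D' (clock G).

Fixpoint wkSub D G (s : Sub D G) {struct s} : forall D', Wk D D' -> Sub D' G :=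
  match s in Sub D G return forall D', Wk D D' -> Sub D' G with
  | snil _ => fun D' w => snil D'
  | sext s0 t => fun D' w => sext (wkSub s0 w) (wkTm t w)
  | slock s0 r => fun D' w =>
      let (D0', p) := factorWk w r in slock (wkSub s0 (fst p)) (snd p)
  end.

Fixpoint idSub (G : Ctx) : Sub G G :=
  match G with
  | cnil => snil cnil
  | cext G A => sext (wkSub (idSub G) (wdrop A (idWk G))) (var (vz G A))
  | clock G => slock (idSub G) (r_nil G)
  end.

Definition subHead D G A (s : Sub D (cext G A)) : Tm D A :=
  match s in Sub D H return match H with cext _ B => Tm D B | _ => unit end with
  | snil _ => tt
  | sext _ t => t
  | slock _ _ => tt
  end.

Definition subTail D G A (s : Sub D (cext G A)) : Sub D G :=
  match s in Sub D H return match H with cext H0 _ => Sub D H0 | _ => unit end with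
  | snil _ => tt
  | sext s0 _ => s0
  | slock _ _ => tt
  end.

Definition subLockInv D G (s : Sub D (clock G)) : {D0 : Ctx & (Sub D0 G * Rel D0 D)%type} :=
  match s in Sub D H
  return match H with clock H0 => {D0 : Ctx & (Sub D0 H0 * Rel D0 D)%type} | _ => unit end with
  | snil _ => tt
  | sext _ _ => tt
  | slock s0 r => existT _ _ (s0, r)
  end.

Fixpoint factorSub G0 G (e : Rel G0 G) {struct e}
  : forall D, Sub D G -> {D0 : Ctx & (Sub D0 G0 * Rel D0 D)%type} :=
  match e in Rel _ G return forall D, Sub D G -> {D0 : Ctx & (Sub D0 G0 * Rel D0 D)%type} with
  | r_nil _ => fun D s => subLockInv s
  | r_ext _ e0 => fun D s => factorSub e0 (subTail s)
  end.

Fixpoint lookup G A (x : Var G A) {struct x} : forall D, Sub D G -> Tm D A :=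
  match x in Var G A return forall D, Sub D G -> Tm D A with
  | vz _ _ => fun D s => subHead s
  | vs _ x0 => fun D s => lookup x0 (subTail s)
  end.

Definition liftSub D G A (s : Sub D G) : Sub (cext D A) (cext G A) :=
  sext (wkSub s (wdrop A (idWk D))) (var (vz D A)).

Fixpoint subst G A (t : Tm G A) {struct t} : forall D, Sub D G -> Tm D A :=
  match t in Tm G A return forall D, Sub D G -> Tm D A with
  | var x => fun D s => lookup x s
  | lam t0 => fun D s => lam (subst t0 (liftSub _ s))
  | app t1 t2 => fun D s => app (subst t1 s) (subst t2 s)
  | tbox t0 => fun D s => tbox (subst t0 (slock s (r_nil D)))
  | unbox t0 e => fun D s =>
      let (D0, p) := factorSub e s in unbox (subst t0 (fst p)) (snd p)
  end.

Inductive Conv : forall G A, Tm G A -> Tm G A -> Prop :=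
| conv_refl : forall G A (t : Tm G A), Conv t t
| conv_sym : forall G A (t u : Tm G A), Conv t u -> Conv u t
| conv_trans : forall G A (t u v : Tm G A), Conv t u -> Conv u v -> Conv t v
| cong_lam : forall G A B (t u : Tm (cext G A) B), Conv t u -> Conv (lam t) (lam u)
| cong_app : forall G A B (t t' : Tm G (arr A B)) (u u' : Tm G A),
    Conv t t' -> Conv u u' -> Conv (app t u) (app t' u')
| cong_box : forall G A (t u : Tm (clock G) A), Conv t u -> Conv (tbox t) (tbox u)
| cong_unbox : forall D G A (t u : Tm D (box A)) (e : Rel D G),
    Conv t u -> Conv (unbox t e) (unbox u e)
| beta_fun : forall G A B (t : Tm (cext G A) B) (u : Tm G A),
    Conv (app (lam t) u) (subst t (sext (idSub G) u))
| eta_fun : forall G A B (t : Tm G (arr A B)),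
    Conv t (lam (app (wkTm t (wdrop A (idWk G))) (var (vz G A))))
| beta_box : forall D G A (t : Tm (clock D) A) (e : Rel D G),
    Conv (unbox (tbox t) e) (wkTm t (factor e))
| eta_box : forall G A (t : Tm G (box A)),
    Conv t (tbox (unbox t (r_nil G))).

Record CCC : Type := {
  Obj : Type;
  Hom : Obj -> Obj -> Type;
  idm : forall a, Hom a a;
  comp : forall a b c, Hom b c -> Hom a b -> Hom a c;
  comp_id_l : forall a b (f : Hom a b), comp (idm b) f = f;
  comp_id_r : forall a b (f : Hom a b), comp f (idm a) = f;
  comp_assoc : forall a b c d (f : Hom a b) (g : Hom b c) (h : Hom c d),
      comp h (comp g f) = comp (comp h g) f;
  one : Obj;
  bang : forall a, Hom a one;
  bang_uniq : forall a (f : Hom a one), f = bang a;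
  prod : Obj -> Obj -> Obj;
  pfst : forall a b, Hom (prod a b) a;
  psnd : forall a b, Hom (prod a b) b;
  pair : forall c a b, Hom c a -> Hom c b -> Hom c (prod a b);
  pair_fst : forall c a b (f : Hom c a) (g : Hom c b), comp (pfst a b) (pair f g) = f;
  pair_snd : forall c a b (f : Hom c a) (g : Hom c b), comp (psnd a b) (pair f g) = g;
  pair_uniq : forall c a b (h : Hom c (prod a b)),
      h = pair (comp (pfst a b) h) (comp (psnd a b) h);
  expo : Obj -> Obj -> Obj;                (* expo a b = b^a *)
  ev : forall a b, Hom (prod (expo a b) a) b;
  cur : forall c a b, Hom (prod c a) b -> Hom c (expo a b);
  cur_beta : forall c a b (f : Hom (prod c a) b),
      comp (ev a b) (pair (comp (cur f) (pfst c a)) (psnd c a)) = f;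
  cur_uniq : forall c a b (h : Hom c (expo a b)),
      h = cur (comp (ev a b) (pair (comp h (pfst c a)) (psnd c a)))
}.

Arguments Hom {_} _ _.
Arguments idm {_} _.
Arguments comp {_ _ _ _} _ _.
Arguments one {_}.
Arguments bang {_} _.
Arguments prod {_} _ _.
Arguments pfst {_ _ _}.
Arguments psnd {_ _ _}.
Arguments pair {_ _ _ _} _ _.
Arguments expo {_} _ _.
Arguments ev {_ _ _}.
Arguments cur {_ _ _ _} _.

(** An adjunction  L ⊣ R  of endofunctors on a CCC (L interprets the lock,
    R interprets Box), given by a natural bijection of hom-sets. *)
Record Adj (C : CCC) : Type := {
  L : Obj C -> Obj C;
  Lmap : forall a b : Obj C, Hom a b -> Hom (L a) (L b);
  Lmap_id : forall a : Obj C, Lmap a a (idm a) = idm (L a);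
  Lmap_comp : forall (a b c : Obj C) (f : Hom a b) (g : Hom b c),
      Lmap a c (comp g f) = comp (Lmap b c g) (Lmap a b f);
  R : Obj C -> Obj C;
  Rmap : forall a b : Obj C, Hom a b -> Hom (R a) (R b);
  Rmap_id : forall a : Obj C, Rmap a a (idm a) = idm (R a);
  Rmap_comp : forall (a b c : Obj C) (f : Hom a b) (g : Hom b c),
      Rmap a c (comp g f) = comp (Rmap b c g) (Rmap a b f);
  adjr : forall a b : Obj C, Hom (L a) b -> Hom a (R b);
  adjl : forall a b : Obj C, Hom a (R b) -> Hom (L a) b;
  adjl_adjr : forall (a b : Obj C) (f : Hom (L a) b), adjl a b (adjr a b f) = f;
  adjr_adjl : forall (a b : Obj C) (g : Hom a (R b)), adjr a b (adjl a b g) = g;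
  adj_nat : forall (a a' b b' : Obj C) (h : Hom a' a) (g : Hom b b') (f : Hom (L a) b),
      adjr a' b' (comp g (comp f (Lmap a' a h)))
      = comp (Rmap b b' g) (comp (adjr a b f) h)
}.

Arguments L {_} _ _.
Arguments R {_} _ _.
Arguments adjr {_} _ {_ _} _.
Arguments adjl {_} _ {_ _} _.

Section Sem.
Variables (M : CCC) (F : Adj M) (io : Obj M).

Fixpoint semTy (A : Ty) : Obj M :=
  match A with
  | iota => io
  | arr A B => expo (semTy A) (semTy B)
  | box A => R F (semTy A)
  end.

Fixpoint semCtx (G : Ctx) : Obj M :=
  match G with
  | cnil => one
  | cext G A => prod (semCtx G) (semTy A)
  | clock G => L F (semCtx G)
  end.

Fixpoint semVar G A (x : Var G A) : Hom (semCtx G) (semTy A) :=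
  match x in Var G A return Hom (semCtx G) (semTy A) with
  | vz _ _ => psnd
  | vs _ x0 => comp (semVar x0) pfst
  end.

Fixpoint semRel D G (e : Rel D G) : Hom (semCtx G) (L F (semCtx D)) :=
  match e in Rel _ G return Hom (semCtx G) (L F (semCtx D)) with
  | r_nil _ => idm _
  | r_ext _ e0 => comp (semRel e0) pfst
  end.

Fixpoint semTm G A (t : Tm G A) : Hom (semCtx G) (semTy A) :=
  match t in Tm G A return Hom (semCtx G) (semTy A) with
  | var x => semVar x
  | lam t0 => cur (semTm t0)
  | app t1 t2 => comp ev (pair (semTm t1) (semTm t2))
  | tbox t0 => adjr F (semTm t0)
  | unbox t0 e => comp (adjl F (semTm t0)) (semRel e)
  end.
End Sem.

(** Completeness is proved by normalisation by evaluation in one particular model.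
    Presheaves over the category of weakenings form a CCC; the lock is interpreted by
    the left adjoint sending [X] to [G |-> {D & X D * (D R G)}] and [Box] by its right
    adjoint [Y |-> (G |-> Y (G, lock))], and the base type by the presheaf of terms.
    A Kripke logical relation between terms and values shows, by reflecting the
    variables of [G] and reifying the value of [t], that every [t] is convertible to a
    term [nbe t] computed from its interpretation alone; so terms with the same
    interpretation in every model are convertible. *)

From Stdlib Require Import Program.Equality FunctionalExtensionality ProofIrrelevance.
Set Implicit Arguments.

(** * Weakenings *)

Fixpoint compWk G1 G2 G3 (w1 : Wk G1 G2) (w2 : Wk G2 G3) {struct w2} : Wk G1 G3 :=
  match w2 in Wk G2 G3 return Wk G1 G2 -> Wk G1 G3 with
  | wbase => fun w1 => w1
  | wdrop A w2' => fun w1 => wdrop A (compWk w1 w2')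
  | @wkeep H H' A w2' => fun w1 =>
      match w1 in Wk G1 X return
        match X with
        | cext X0 B => (forall Z, Wk Z X0 -> Wk Z H') -> Wk G1 (cext H' B)
        | _ => unit
        end with
      | wdrop B w1' => fun rec => wdrop B (rec _ w1')
      | wkeep B w1' => fun rec => wkeep B (rec _ w1')
      | _ => tt
      end (fun Z w => compWk w w2')
  | @wkeepL H H' w2' => fun w1 =>
      match w1 in Wk G1 X return
        match X with
        | clock X0 => (forall Z, Wk Z X0 -> Wk Z H') -> Wk G1 (clock H')
        | _ => unit
        end with
      | wkeepL w1' => fun rec => wkeepL (rec _ w1')
      | _ => tt
      end (fun Z w => compWk w w2')
  end w1.

Lemma compWk_idl G G' (w : Wk G G') : compWk (idWk G) w = w.
Proof. induction w; simpl; f_equal; auto. Qed.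

Lemma compWk_idr G G' (w : Wk G G') : compWk w (idWk G') = w.
Proof. induction w; simpl; f_equal; auto. Qed.

Lemma compWk_assoc G1 G2 G3 G4 (w1 : Wk G1 G2) (w2 : Wk G2 G3) (w3 : Wk G3 G4) :
  compWk (compWk w1 w2) w3 = compWk w1 (compWk w2 w3).
Proof.
  revert G1 G2 w1 w2; induction w3; intros G1 G2 w1 w2; simpl.
  - reflexivity.
  - f_equal; auto.
  - dependent destruction w2; simpl.
    + f_equal; auto.
    + dependent destruction w1; simpl; f_equal; auto.
  - dependent destruction w2; dependent destruction w1; simpl; f_equal; auto.
Qed.

Lemma compWk_drop_idl G G' A (w : Wk G G') :
  compWk (wdrop A (idWk G)) (wkeep A w) = wdrop A w.
Proof. simpl; rewrite compWk_idl; reflexivity. Qed.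

Lemma compWk_drop_idr G G' A (w : Wk G G') :
  compWk w (wdrop A (idWk G')) = wdrop A w.
Proof. simpl; rewrite compWk_idr; reflexivity. Qed.

Lemma wkVar_idWk G A (x : Var G A) : wkVar (idWk G) x = x.
Proof. induction x; simpl; f_equal; auto. Qed.

Lemma wkVar_compWk G1 G2 G3 (w1 : Wk G1 G2) (w2 : Wk G2 G3) A (x : Var G1 A) :
  wkVar (compWk w1 w2) x = wkVar w2 (wkVar w1 x).
Proof.
  revert G1 w1 A x; induction w2; intros G1 w1 B x; simpl.
  - dependent destruction w1; destruct (varNilInv x).
  - f_equal; auto.
  - dependent destruction w1; simpl.
    + f_equal; auto.
    + dependent destruction x; simpl; f_equal; auto.
  - dependent destruction w1; destruct (varLockInv x).
Qed.

Lemma factorWk_idWk D G (e : Rel D G) : factorWk (idWk G) e = existT _ D (idWk D, e).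
Proof. induction e; simpl; [| rewrite IHe]; reflexivity. Qed.

Lemma factorWk_compWk G1 G2 G3 (w1 : Wk G1 G2) (w2 : Wk G2 G3) D (e : Rel D G1) :
  factorWk (compWk w1 w2) e =
  let (D1, p1) := factorWk w1 e in
  let (D2, p2) := factorWk w2 (snd p1) in
  existT _ D2 (compWk (fst p1) (fst p2), snd p2).
Proof.
  revert G1 w1 D e; induction w2; intros G1 w1 D e; simpl.
  - dependent destruction w1; destruct (relNilInv e).
  - rewrite IHw2; destruct (factorWk w1 e) as [D1 [a1 b1]]; simpl.
    destruct (factorWk w2 b1); reflexivity.
  - dependent destruction w1; [| dependent destruction e]; simpl;
      rewrite IHw2; destruct (factorWk w1 e) as [D1 [a1 b1]]; simpl;
      destruct (factorWk w2 b1); reflexivity.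
  - dependent destruction w1; dependent destruction e; reflexivity.
Qed.

Lemma factor_compWk D G (e : Rel D G) G' (w : Wk G G') :
  compWk (factor e) w =
  let (D', p) := factorWk w e in compWk (wkeepL (fst p)) (factor (snd p)).
Proof.
  revert D e; induction w; intros D e; simpl.
  - destruct (relNilInv e).
  - rewrite IHw; destruct (factorWk w e); reflexivity.
  - dependent destruction e; simpl; rewrite IHw; destruct (factorWk w e); reflexivity.
  - dependent destruction e; simpl; rewrite compWk_idl, compWk_idr; reflexivity.
Qed.

Lemma factorWk_factor D G (e : Rel D G) :
  factorWk (factor e) (r_nil D) = existT _ D (idWk D, e).
Proof. induction e; simpl; [| rewrite IHe]; reflexivity. Qed.

Lemma wkTm_idWk G A (t : Tm G A) : wkTm t (idWk G) = t.
Proof.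
  induction t; simpl.
  - rewrite wkVar_idWk; reflexivity.
  - change (wkeep A (idWk G)) with (idWk (cext G A)); rewrite IHt; reflexivity.
  - rewrite IHt1, IHt2; reflexivity.
  - change (wkeepL (idWk G)) with (idWk (clock G)); rewrite IHt; reflexivity.
  - rewrite factorWk_idWk; simpl; rewrite IHt; reflexivity.
Qed.

Lemma wkTm_compWk G1 A (t : Tm G1 A) G2 G3 (w1 : Wk G1 G2) (w2 : Wk G2 G3) :
  wkTm t (compWk w1 w2) = wkTm (wkTm t w1) w2.
Proof.
  revert G2 G3 w1 w2; induction t; intros G2 G3 w1 w2; simpl.
  - rewrite wkVar_compWk; reflexivity.
  - change (wkeep A (compWk w1 w2)) with (compWk (wkeep A w1) (wkeep A w2)).
    rewrite IHt; reflexivity.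
  - rewrite IHt1, IHt2; reflexivity.
  - change (wkeepL (compWk w1 w2)) with (compWk (wkeepL w1) (wkeepL w2)).
    rewrite IHt; reflexivity.
  - rewrite factorWk_compWk; destruct (factorWk w1 r) as [D1 [a1 b1]]; simpl.
    destruct (factorWk w2 b1); simpl; rewrite IHt; reflexivity.
Qed.

(** * Substitutions *)

Lemma wkSub_idWk D G (s : Sub D G) : wkSub s (idWk D) = s.
Proof.
  induction s; simpl.
  - reflexivity.
  - rewrite IHs, wkTm_idWk; reflexivity.
  - rewrite factorWk_idWk; simpl; rewrite IHs; reflexivity.
Qed.

Lemma wkSub_compWk D G (s : Sub D G) D2 D3 (w1 : Wk D D2) (w2 : Wk D2 D3) :
  wkSub s (compWk w1 w2) = wkSub (wkSub s w1) w2.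
Proof.
  revert D2 D3 w1 w2; induction s; intros D2 D3 w1 w2; simpl.
  - reflexivity.
  - rewrite IHs, wkTm_compWk; reflexivity.
  - rewrite factorWk_compWk; destruct (factorWk w1 r) as [E1 [a1 b1]]; simpl.
    destruct (factorWk w2 b1); simpl; rewrite IHs; reflexivity.
Qed.

Lemma lookup_wkSub G A (x : Var G A) D (s : Sub D G) D' (w : Wk D D') :
  lookup x (wkSub s w) = wkTm (lookup x s) w.
Proof. revert D s D' w; induction x; intros D s D' w; dependent destruction s; simpl; auto. Qed.

Lemma factorSub_wkSub G0 G (e : Rel G0 G) D (s : Sub D G) D' (w : Wk D D') :
  factorSub e (wkSub s w) =
  let (D0, p) := factorSub e s in
  let (D1, q) := factorWk w (snd p) in
  existT _ D1 (wkSub (fst p) (fst q), snd q).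
Proof.
  revert D s D' w; induction e; intros D s D' w; dependent destruction s; simpl.
  - destruct (factorWk w r); reflexivity.
  - apply IHe.
Qed.

Lemma wkSub_liftSub D G A (s : Sub D G) D' (w : Wk D D') :
  wkSub (liftSub A s) (wkeep A w) = liftSub A (wkSub s w).
Proof.
  unfold liftSub; simpl.
  rewrite <- !wkSub_compWk, compWk_drop_idl, compWk_drop_idr; reflexivity.
Qed.

Lemma wkTm_subst G A (t : Tm G A) D (s : Sub D G) D' (w : Wk D D') :
  wkTm (subst t s) w = subst t (wkSub s w).
Proof.
  revert D s D' w; induction t; intros D0 s D' w; simpl.
  - symmetry; apply lookup_wkSub.
  - rewrite IHt, wkSub_liftSub; reflexivity.
  - rewrite IHt1, IHt2; reflexivity.
  - rewrite IHt; reflexivity.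
  - rewrite factorSub_wkSub; destruct (factorSub r s) as [E0 [a b]]; simpl.
    destruct (factorWk w b); simpl; rewrite IHt; reflexivity.
Qed.

(** [restrSub w s] is the composite of [s] with [w], keeping the entries of [s] selected by [w]. *)
Fixpoint restrSub G G' (w : Wk G G') {struct w} : forall D, Sub D G' -> Sub D G :=
  match w in Wk G G' return forall D, Sub D G' -> Sub D G with
  | wbase => fun D _ => snil D
  | wdrop A w0 => fun D s => restrSub w0 (subTail s)
  | wkeep A w0 => fun D s => sext (restrSub w0 (subTail s)) (subHead s)
  | wkeepL w0 => fun D s =>
      let (D0, p) := subLockInv s in slock (restrSub w0 (fst p)) (snd p)
  end.

Lemma lookup_restrSub G G' (w : Wk G G') A (x : Var G A) D (s : Sub D G') :
  lookup x (restrSub w s) = lookup (wkVar w x) s.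
Proof.
  revert A x D s; induction w; intros B x D s; simpl.
  - destruct (varNilInv x).
  - dependent destruction s; apply IHw.
  - dependent destruction s; dependent destruction x; simpl; auto.
  - destruct (varLockInv x).
Qed.

Lemma factorSub_restrSub G G' (w : Wk G G') G0 (e : Rel G0 G) D (s : Sub D G') :
  factorSub e (restrSub w s) =
  let (D', p) := factorWk w e in
  let (D0, q) := factorSub (snd p) s in
  existT _ D0 (restrSub (fst p) (fst q), snd q).
Proof.
  revert G0 e D s; induction w; intros G0 e D s; simpl.
  - destruct (relNilInv e).
  - dependent destruction s; simpl; rewrite IHw; destruct (factorWk w e); reflexivity.
  - dependent destruction s; dependent destruction e; simpl; rewrite IHw;
      destruct (factorWk w e); reflexivity.
  - dependent destruction s; dependent destruction e; reflexivity.
Qed.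

Lemma restrSub_wkSub G G' (w : Wk G G') D (s : Sub D G') D' (w' : Wk D D') :
  restrSub w (wkSub s w') = wkSub (restrSub w s) w'.
Proof.
  revert D s D' w'; induction w; intros D s D' w'; simpl.
  - reflexivity.
  - dependent destruction s; apply IHw.
  - dependent destruction s; simpl; rewrite IHw; reflexivity.
  - dependent destruction s; simpl; destruct (factorWk w' r); simpl; rewrite IHw; reflexivity.
Qed.

Lemma restrSub_liftSub G G' A (w : Wk G G') D (s : Sub D G') :
  restrSub (wkeep A w) (liftSub A s) = liftSub A (restrSub w s).
Proof. unfold liftSub; simpl; rewrite restrSub_wkSub; reflexivity. Qed.

Lemma subst_wkTm G A (t : Tm G A) G' (w : Wk G G') D (s : Sub D G') :
  subst (wkTm t w) s = subst t (restrSub w s).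
Proof.
  revert G' w D s; induction t; intros G' w D0 s; simpl.
  - symmetry; apply lookup_restrSub.
  - rewrite IHt, restrSub_liftSub; reflexivity.
  - rewrite IHt1, IHt2; reflexivity.
  - rewrite IHt; reflexivity.
  - rewrite factorSub_restrSub; destruct (factorWk w r) as [D1 [a b]]; simpl.
    destruct (factorSub b s); simpl; rewrite IHt; reflexivity.
Qed.

Lemma restrSub_idWk G D (s : Sub D G) : restrSub (idWk G) s = s.
Proof.
  revert D s; induction G; intros D s; dependent destruction s; simpl;
    try rewrite IHG; reflexivity.
Qed.

Lemma restrSub_idSub G G' (w : Wk G G') : restrSub w (idSub G') = wkSub (idSub G) w.
Proof.
  induction w; simpl.
  - reflexivity.
  - rewrite restrSub_wkSub, IHw, <- wkSub_compWk, compWk_drop_idr; reflexivity.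
  - rewrite restrSub_wkSub, IHw, <- !wkSub_compWk, compWk_drop_idr, compWk_drop_idl.
    reflexivity.
  - rewrite IHw; reflexivity.
Qed.

Fixpoint compSub D G (s : Sub D G) {struct s} : forall E, Sub E D -> Sub E G :=
  match s in Sub D G return forall E, Sub E D -> Sub E G with
  | snil _ => fun E _ => snil E
  | sext s0 t => fun E tau => sext (compSub s0 tau) (subst t tau)
  | slock s0 e => fun E tau =>
      let (E0, p) := factorSub e tau in slock (compSub s0 (fst p)) (snd p)
  end.

Lemma compSub_wkSub_l D G (s : Sub D G) D' (w : Wk D D') E (tau : Sub E D') :
  compSub (wkSub s w) tau = compSub s (restrSub w tau).
Proof.
  revert D' w E tau; induction s; intros D1 w E tau; simpl.
  - reflexivity.
  - rewrite IHs, subst_wkTm; reflexivity.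
  - rewrite factorSub_restrSub; destruct (factorWk w r) as [D2 [a b]]; simpl.
    destruct (factorSub b tau); simpl; rewrite IHs; reflexivity.
Qed.

Lemma compSub_wkSub_r D G (s : Sub D G) E (tau : Sub E D) E' (w : Wk E E') :
  compSub s (wkSub tau w) = wkSub (compSub s tau) w.
Proof.
  revert E tau E' w; induction s; intros E tau E' w; simpl.
  - reflexivity.
  - rewrite IHs, wkTm_subst; reflexivity.
  - rewrite factorSub_wkSub; destruct (factorSub r tau) as [E0 [a b]]; simpl.
    destruct (factorWk w b); simpl; rewrite IHs; reflexivity.
Qed.

Lemma lookup_compSub G A (x : Var G A) D (s : Sub D G) E (tau : Sub E D) :
  lookup x (compSub s tau) = subst (lookup x s) tau.
Proof.
  revert D s E tau; induction x; intros D s E tau; dependent destruction s; simpl; auto.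
Qed.

Lemma factorSub_compSub G0 G (e : Rel G0 G) D (s : Sub D G) E (tau : Sub E D) :
  factorSub e (compSub s tau) =
  let (D0, p) := factorSub e s in
  let (E0, q) := factorSub (snd p) tau in
  existT _ E0 (compSub (fst p) (fst q), snd q).
Proof.
  revert D s E tau; induction e; intros D s E tau; dependent destruction s; simpl.
  - destruct (factorSub r tau); reflexivity.
  - apply IHe.
Qed.

Lemma compSub_liftSub D G A (s : Sub D G) E (tau : Sub E D) :
  compSub (liftSub A s) (liftSub A tau) = liftSub A (compSub s tau).
Proof.
  unfold liftSub at 1; simpl.
  rewrite compSub_wkSub_l; simpl; rewrite restrSub_idWk, compSub_wkSub_r; reflexivity.
Qed.

Lemma subst_compSub G A (t : Tm G A) D (s : Sub D G) E (tau : Sub E D) :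
  subst (subst t s) tau = subst t (compSub s tau).
Proof.
  revert D s E tau; induction t; intros D1 s E tau; simpl.
  - symmetry; apply lookup_compSub.
  - rewrite IHt, compSub_liftSub; reflexivity.
  - rewrite IHt1, IHt2; reflexivity.
  - rewrite IHt; reflexivity.
  - rewrite factorSub_compSub; destruct (factorSub r s) as [D2 [a b]]; simpl.
    destruct (factorSub b tau); simpl; rewrite IHt; reflexivity.
Qed.

Lemma lookup_idSub G A (x : Var G A) : lookup x (idSub G) = var x.
Proof.
  induction x; simpl; auto.
  rewrite lookup_wkSub, IHx; simpl; rewrite wkVar_idWk; reflexivity.
Qed.

Lemma factorSub_idSub G0 G (e : Rel G0 G) :
  factorSub e (idSub G) = existT _ G0 (idSub G0, e).
Proof.
  induction e; simpl.
  - reflexivity.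
  - rewrite factorSub_wkSub, IHe; simpl; rewrite factorWk_idWk; simpl.
    rewrite wkSub_idWk; reflexivity.
Qed.

Lemma subst_idSub G A (t : Tm G A) : subst t (idSub G) = t.
Proof.
  induction t; simpl.
  - apply lookup_idSub.
  - change (liftSub A (idSub G)) with (idSub (cext G A)); rewrite IHt; reflexivity.
  - rewrite IHt1, IHt2; reflexivity.
  - change (slock (idSub G) (r_nil G)) with (idSub (clock G)); rewrite IHt; reflexivity.
  - rewrite factorSub_idSub; simpl; rewrite IHt; reflexivity.
Qed.

Lemma compSub_idSub_r D G (s : Sub D G) : compSub s (idSub D) = s.
Proof.
  induction s; simpl.
  - reflexivity.
  - rewrite IHs, subst_idSub; reflexivity.
  - rewrite factorSub_idSub; simpl; rewrite IHs; reflexivity.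
Qed.

Lemma wkTm_subst_beta G A B (t : Tm (cext G A) B) (u : Tm G A) G' (w : Wk G G') :
  wkTm (subst t (sext (idSub G) u)) w
  = subst (wkTm t (wkeep A w)) (sext (idSub G') (wkTm u w)).
Proof. rewrite wkTm_subst, subst_wkTm; simpl; rewrite restrSub_idSub; reflexivity. Qed.

Lemma subst_beta_liftSub G A B (t : Tm (cext G A) B) D (s : Sub D G) D' (w : Wk D D')
    (a : Tm D' A) :
  subst (wkTm (subst t (liftSub A s)) (wkeep A w)) (sext (idSub D') a)
  = subst t (sext (wkSub s w) a).
Proof.
  rewrite subst_wkTm, subst_compSub; f_equal; unfold liftSub; simpl.
  rewrite compSub_wkSub_l; simpl.
  rewrite restrSub_idWk, restrSub_idSub, compSub_wkSub_r, compSub_idSub_r; reflexivity.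
Qed.

Lemma Conv_wkTm G A (t u : Tm G A) :
  Conv t u -> forall G' (w : Wk G G'), Conv (wkTm t w) (wkTm u w).
Proof.
  induction 1; intros G' w; simpl.
  - apply conv_refl.
  - apply conv_sym; auto.
  - eapply conv_trans; eauto.
  - apply cong_lam; auto.
  - apply cong_app; auto.
  - apply cong_box; auto.
  - destruct (factorWk w e); simpl; apply cong_unbox; auto.
  - rewrite wkTm_subst_beta; apply beta_fun.
  - rewrite <- wkTm_compWk, compWk_drop_idl, <- compWk_drop_idr, wkTm_compWk.
    apply eta_fun.
  - pose proof (factor_compWk e w) as Hfactor.
    destruct (factorWk w e); simpl in *.
    rewrite <- wkTm_compWk, Hfactor, wkTm_compWk; apply beta_box.
  - apply eta_box.
Qed.

(** * Presheaves over weakenings *)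

Record PSh : Type := {
  psh :> Ctx -> Type;
  pshWk : forall G G', Wk G G' -> psh G -> psh G';
  pshWk_idWk : forall G x, pshWk (idWk G) x = x;
  pshWk_compWk : forall G1 G2 G3 (w1 : Wk G1 G2) (w2 : Wk G2 G3) x,
      pshWk (compWk w1 w2) x = pshWk w2 (pshWk w1 x)
}.
Arguments pshWk _ {G G'} w x.

Record NT (X Y : PSh) : Type := {
  nt :> forall G, X G -> Y G;
  nt_wk : forall G G' (w : Wk G G') x, nt G' (pshWk X w x) = pshWk Y w (nt G x)
}.

Lemma NT_ext X Y (f g : NT X Y) : (forall G x, f G x = g G x) -> f = g.
Proof.
  destruct f as [f Hf], g as [g Hg]; simpl; intro Hfg.
  assert (f = g) as <-.
  { apply functional_extensionality_dep; intro G; apply functional_extensionality, Hfg. }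
  f_equal; apply proof_irrelevance.
Qed.

Definition idNT X : NT X X := {| nt := fun G x => x; nt_wk := fun _ _ _ _ => eq_refl |}.

Definition compNT X Y Z (g : NT Y Z) (f : NT X Y) : NT X Z.
Proof.
  refine (@Build_NT X Z (fun G x => g G (f G x)) _).
  intros; rewrite !nt_wk; reflexivity.
Defined.

Definition unitPSh : PSh :=
  {| psh := fun _ => unit; pshWk := fun _ _ _ x => x;
     pshWk_idWk := fun _ _ => eq_refl; pshWk_compWk := fun _ _ _ _ _ _ => eq_refl |}.

Definition bangNT X : NT X unitPSh := @Build_NT X unitPSh (fun _ _ => tt) (fun _ _ _ _ => eq_refl).

Section Products.
Variables X Y : PSh.

Definition prodPSh : PSh.
Proof.
  refine {| psh := fun G => (X G * Y G)%type;
            pshWk := fun G G' w p => (pshWk X w (fst p), pshWk Y w (snd p)) |}.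
  - intros G [x y]; simpl; rewrite !pshWk_idWk; reflexivity.
  - intros G1 G2 G3 w1 w2 [x y]; simpl; rewrite !pshWk_compWk; reflexivity.
Defined.

Definition fstNT : NT prodPSh X :=
  @Build_NT prodPSh X (fun G p => fst p) (fun _ _ _ _ => eq_refl).

Definition sndNT : NT prodPSh Y :=
  @Build_NT prodPSh Y (fun G p => snd p) (fun _ _ _ _ => eq_refl).

End Products.

Definition pairNT Z X Y (f : NT Z X) (g : NT Z Y) : NT Z (prodPSh X Y).
Proof.
  refine (@Build_NT Z (prodPSh X Y) (fun G z => (f G z, g G z)) _).
  intros; simpl; rewrite !nt_wk; reflexivity.
Defined.

Section Exponentials.
Variables X Y : PSh.

Record KFun (G : Ctx) : Type := {
  kapp : forall D, Wk G D -> X D -> Y D;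
  kapp_wk : forall D D' (w : Wk G D) (w' : Wk D D') x,
      pshWk Y w' (kapp w x) = kapp (compWk w w') (pshWk X w' x)
}.

Lemma KFun_ext G (f g : KFun G) : (forall D (w : Wk G D) x, kapp f w x = kapp g w x) -> f = g.
Proof.
  destruct f as [f Hf], g as [g Hg]; simpl; intro Hfg.
  assert (f = g) as <-.
  { apply functional_extensionality_dep; intro D.
    apply functional_extensionality; intro w; apply functional_extensionality, Hfg. }
  f_equal; apply proof_irrelevance.
Qed.

Definition wkKFun G G' (w0 : Wk G G') (f : KFun G) : KFun G'.
Proof.
  refine {| kapp := fun D w x => kapp f (compWk w0 w) x |}.
  intros; rewrite kapp_wk, compWk_assoc; reflexivity.
Defined.

Definition expPSh : PSh.
Proof.
  refine {| psh := KFun; pshWk := wkKFun |}.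
  - intros G f; apply KFun_ext; intros; simpl; rewrite compWk_idl; reflexivity.
  - intros G1 G2 G3 w1 w2 f; apply KFun_ext; intros; simpl; rewrite compWk_assoc; reflexivity.
Defined.

Definition evalNT : NT (prodPSh expPSh X) Y.
Proof.
  refine (@Build_NT (prodPSh expPSh X) Y (fun G p => kapp (fst p) (idWk G) (snd p)) _).
  intros G G' w [f x]; simpl; rewrite kapp_wk, compWk_idl, compWk_idr; reflexivity.
Defined.

End Exponentials.

Definition curryNT Z X Y (f : NT (prodPSh Z X) Y) : NT Z (expPSh X Y).
Proof.
  unshelve refine (@Build_NT Z (expPSh X Y) (fun G z =>
    {| kapp := fun D w x => f D (pshWk Z w z, x) |}) _).
  - intros; simpl; rewrite pshWk_compWk; exact (eq_sym (nt_wk f w' (pshWk Z w z, x))).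
  - intros G G' w z; apply KFun_ext; intros; simpl; rewrite pshWk_compWk; reflexivity.
Defined.

Definition PSh_CCC : CCC.
Proof.
  refine {| Obj := PSh; Hom := NT; idm := idNT; comp := compNT;
            one := unitPSh; bang := bangNT; prod := prodPSh; pfst := fstNT; psnd := sndNT;
            pair := pairNT; expo := expPSh; ev := evalNT; cur := curryNT |};
    intros; apply NT_ext; intros G x; simpl; try reflexivity.
  - destruct (f G x); reflexivity.
  - apply surjective_pairing.
  - destruct x; simpl; rewrite pshWk_idWk; reflexivity.
  - apply KFun_ext; intros D w y; simpl; rewrite nt_wk; simpl; rewrite compWk_idr; reflexivity.
Defined.

(** * The lock and box functors *)

Inductive Locked (X : PSh) (G : Ctx) : Type :=
| lockIn (D : Ctx) (x : X D) (e : Rel D G).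
Arguments lockIn {X G D} x e.

Definition lockPSh (X : PSh) : PSh.
Proof.
  refine {| psh := Locked X;
            pshWk := fun G G' w p =>
              let (D, x, e) := p in
              let (D', q) := factorWk w e in lockIn (pshWk X (fst q) x) (snd q) |}.
  - intros G [D x e]; simpl; rewrite factorWk_idWk; simpl; rewrite pshWk_idWk; reflexivity.
  - intros G1 G2 G3 w1 w2 [D x e]; simpl; rewrite factorWk_compWk.
    destruct (factorWk w1 e) as [D1 [a1 b1]]; simpl.
    destruct (factorWk w2 b1); simpl; rewrite pshWk_compWk; reflexivity.
Defined.

Definition boxPSh (Y : PSh) : PSh.
Proof.
  refine {| psh := fun G => Y (clock G); pshWk := fun G G' w y => pshWk Y (wkeepL w) y |}.
  - intros G y; exact (pshWk_idWk Y (clock G) y).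
  - intros G1 G2 G3 w1 w2 y; exact (pshWk_compWk Y (wkeepL w1) (wkeepL w2) y).
Defined.

Definition lockNT X Y (f : NT X Y) : NT (lockPSh X) (lockPSh Y).
Proof.
  refine (@Build_NT (lockPSh X) (lockPSh Y) (fun G p => let (D, x, e) := p in lockIn (f D x) e) _).
  intros G G' w [D x e]; simpl; destruct (factorWk w e); simpl; rewrite nt_wk; reflexivity.
Defined.

Definition boxNT X Y (g : NT X Y) : NT (boxPSh X) (boxPSh Y).
Proof.
  refine (@Build_NT (boxPSh X) (boxPSh Y) (fun G y => g (clock G) y) _).
  intros G G' w y; exact (nt_wk g (wkeepL w) y).
Defined.

Definition boxIntroNT X Y (f : NT (lockPSh X) Y) : NT X (boxPSh Y).
Proof.
  refine (@Build_NT X (boxPSh Y) (fun G x => f (clock G) (lockIn x (r_nil G))) _).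
  intros G G' w x; simpl; rewrite <- nt_wk; reflexivity.
Defined.

Definition boxElimNT X Y (g : NT X (boxPSh Y)) : NT (lockPSh X) Y.
Proof.
  refine (@Build_NT (lockPSh X) Y
    (fun G p => let (D, x, e) := p in pshWk Y (factor e) (g D x)) _).
  intros G G' w [D x e]; simpl; pose proof (factor_compWk e w) as Hfactor.
  destruct (factorWk w e); simpl in *.
  rewrite nt_wk; simpl; rewrite <- !pshWk_compWk, Hfactor; reflexivity.
Defined.

Definition PSh_Adj : Adj PSh_CCC.
Proof.
  refine (@Build_Adj PSh_CCC lockPSh lockNT _ _ boxPSh boxNT _ _ boxIntroNT boxElimNT _ _ _);
    intros; apply NT_ext; intros G x; simpl; try reflexivity.
  - destruct x; reflexivity.
  - destruct x; reflexivity.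
  - destruct x as [D x e]; simpl; rewrite <- nt_wk; simpl.
    rewrite factorWk_factor; simpl; rewrite pshWk_idWk; reflexivity.
  - exact (pshWk_idWk b (clock G) _).
Defined.

(** * Normalisation by evaluation *)

Definition tmPSh (A : Ty) : PSh :=
  {| psh := fun G => Tm G A; pshWk := fun G G' w t => wkTm t w;
     pshWk_idWk := fun G t => wkTm_idWk t;
     pshWk_compWk := fun G1 G2 G3 w1 w2 t => wkTm_compWk t w1 w2 |}.

Definition Val (A : Ty) : PSh := @semTy PSh_CCC PSh_Adj (tmPSh iota) A.
Definition Env (G : Ctx) : PSh := @semCtx PSh_CCC PSh_Adj (tmPSh iota) G.
Definition eval G A (t : Tm G A) : NT (Env G) (Val A) := @semTm PSh_CCC PSh_Adj (tmPSh iota) G A t.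
Definition evalRel D G (e : Rel D G) : NT (Env G) (lockPSh (Env D)) :=
  @semRel PSh_CCC PSh_Adj (tmPSh iota) D G e.

Record ReifyReflect (A : Ty) : Type := {
  reify : forall G, Val A G -> Tm G A;
  reflect : forall G, Tm G A -> Val A G;
  reify_wk : forall G G' (w : Wk G G') v, reify G' (pshWk (Val A) w v) = wkTm (reify G v) w;
  reflect_wk : forall G G' (w : Wk G G') (t : Tm G A),
      reflect (wkTm t w) = pshWk (Val A) w (reflect t)
}.
Arguments reify {A} _ {G} v.
Arguments reflect {A} _ {G} t.

Definition reifyReflectIota : ReifyReflect iota :=
  @Build_ReifyReflect iota (fun G v => v) (fun G t => t)
    (fun _ _ _ _ => eq_refl) (fun _ _ _ _ => eq_refl).

Definition reflectArr A B (ra : ReifyReflect A) (rb : ReifyReflect B) G (t : Tm G (arr A B))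
  : Val (arr A B) G.
Proof.
  refine {| kapp := fun D (w : Wk G D) (x : Val A D) => reflect rb (app (wkTm t w) (reify ra x)) |}.
  intros D D' w w' x; rewrite <- reflect_wk; simpl.
  rewrite reify_wk, <- wkTm_compWk; reflexivity.
Defined.

Definition reifyReflectArr A B (ra : ReifyReflect A) (rb : ReifyReflect B) : ReifyReflect (arr A B).
Proof.
  refine (@Build_ReifyReflect (arr A B)
    (fun G (v : Val (arr A B) G) =>
       lam (reify rb (kapp v (wdrop A (idWk G)) (reflect ra (var (vz G A))))))
    (reflectArr ra rb) _ _).
  - intros G G' w v; simpl; f_equal.
    rewrite <- reify_wk, kapp_wk, <- reflect_wk; simpl.
    rewrite compWk_idl, compWk_idr; reflexivity.
  - intros G G' w t; apply KFun_ext; intros D w1 x; simpl; rewrite wkTm_compWk; reflexivity.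
Defined.

Definition reifyReflectBox A (ra : ReifyReflect A) : ReifyReflect (box A).
Proof.
  refine (@Build_ReifyReflect (box A)
    (fun G (v : Val (box A) G) => tbox (reify ra (v : Val A (clock G))))
    (fun G t => (reflect ra (unbox t (r_nil G)) : Val (box A) G)) _ _).
  - intros G G' w v; simpl; f_equal; apply (reify_wk ra (wkeepL w)).
  - intros G G' w t; exact (reflect_wk ra (wkeepL w) (unbox t (r_nil G))).
Defined.

Fixpoint reifyReflect (A : Ty) : ReifyReflect A :=
  match A with
  | iota => reifyReflectIota
  | arr A B => reifyReflectArr (reifyReflect A) (reifyReflect B)
  | box A => reifyReflectBox (reifyReflect A)
  end.

Fixpoint Approx (A : Ty) : forall G, Tm G A -> Val A G -> Prop :=
  match A as A return forall G, Tm G A -> Val A G -> Prop with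
  | iota => fun G t v => Conv t (v : Tm G iota)
  | arr A B => fun G t v =>
      forall D (w : Wk G D) a x, @Approx A D a x -> @Approx B D (app (wkTm t w) a) (kapp v w x)
  | box A => fun G t v => @Approx A (clock G) (unbox t (r_nil G)) v
  end.
Arguments Approx A {G} t v.

Lemma Approx_conv A G (t t' : Tm G A) v : Conv t t' -> Approx A t' v -> Approx A t v.
Proof.
  revert G t t' v; induction A; simpl; intros G t t' v Htt' Happrox.
  - eapply conv_trans; eauto.
  - intros D w a x Hx; eapply IHA2; [| apply (Happrox D w a x Hx)].
    apply cong_app; [apply Conv_wkTm; auto | apply conv_refl].
  - eapply IHA; [| apply Happrox]; apply cong_unbox; auto.
Qed.

Lemma Approx_wk A G (t : Tm G A) v G' (w : Wk G G') :
  Approx A t v -> Approx A (wkTm t w) (pshWk (Val A) w v).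
Proof.
  revert G t v G' w; induction A; simpl; intros G t v G' w Happrox.
  - apply Conv_wkTm; auto.
  - intros D w' a x Hx; rewrite <- wkTm_compWk; apply Happrox; auto.
  - exact (IHA _ _ _ _ (wkeepL w) Happrox).
Qed.

Lemma Approx_reflect_reify A :
  (forall G (t : Tm G A), Approx A t (reflect (reifyReflect A) t)) /\
  (forall G (t : Tm G A) v, Approx A t v -> Conv t (reify (reifyReflect A) v)).
Proof.
  induction A as [| A [IHA_reflect IHA_reify] B [IHB_reflect IHB_reify]
                  | A [IHA_reflect IHA_reify]]; simpl; split.
  - intros; apply conv_refl.
  - auto.
  - intros G t D w a x Hx; simpl.
    eapply Approx_conv; [| apply IHB_reflect].
    apply cong_app; [apply conv_refl | auto].
  - intros G t v Happrox; eapply conv_trans; [apply eta_fun |].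
    apply cong_lam, IHB_reify, Happrox, IHA_reflect.
  - intros G t; apply IHA_reflect.
  - intros G t v Happrox; eapply conv_trans; [apply eta_box |].
    apply cong_box, IHA_reify, Happrox.
Qed.

Fixpoint ApproxSub (G : Ctx) : forall D, Sub D G -> Env G D -> Prop :=
  match G as G return forall D, Sub D G -> Env G D -> Prop with
  | cnil => fun _ _ _ => True
  | cext G A => fun D s (r : Env (cext G A) D) =>
      @ApproxSub G D (subTail s) (fst r) /\ Approx A (subHead s) (snd r)
  | clock G => fun D s (r : Env (clock G) D) =>
      let (D0, r0, e) := r in exists s0, s = slock s0 e /\ @ApproxSub G D0 s0 r0
  end.
Arguments ApproxSub G {D} s r.

Lemma ApproxSub_wk G D (s : Sub D G) r D' (w : Wk D D') :
  ApproxSub G s r -> ApproxSub G (wkSub s w) (pshWk (Env G) w r).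
Proof.
  revert D s r D' w; induction G; intros D s r D' w Happrox.
  - exact I.
  - dependent destruction s; destruct Happrox; simpl; split.
    + apply IHG; auto.
    + apply Approx_wk; auto.
  - destruct r as [D0 r0 e]; destruct Happrox as [s0 [-> Happrox]]; simpl.
    destruct (factorWk w e) as [D1 [w1 e1]]; simpl; exists (wkSub s0 w1); auto.
Qed.

Lemma ApproxSub_lookup G A (x : Var G A) D (s : Sub D G) r :
  ApproxSub G s r -> Approx A (lookup x s) (eval (var x) D r).
Proof.
  revert D s r; induction x; intros D s r Happrox; simpl in *.
  - apply Happrox.
  - apply IHx, Happrox.
Qed.

Lemma ApproxSub_factorSub D0 G (e : Rel D0 G) D (s : Sub D G) r : ApproxSub G s r ->
  let (D1, r1, e1) := evalRel e D r in
  exists s1, factorSub e s = existT _ D1 (s1, e1) /\ ApproxSub D0 s1 r1.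
Proof.
  revert D s r; induction e; intros D s r Happrox; simpl in *.
  - destruct r as [D1 r1 e1]; destruct Happrox as [s0 [-> Happrox]]; exists s0; auto.
  - apply IHe, Happrox.
Qed.

Lemma Approx_subst_eval G A (t : Tm G A) D (s : Sub D G) rho :
  ApproxSub G s rho -> Approx A (subst t s) (eval t D rho).
Proof.
  revert D s rho; induction t; intros D0 s rho Happrox.
  - apply ApproxSub_lookup; auto.
  - intros D w a x Hx; simpl.
    eapply Approx_conv; [apply beta_fun |]; rewrite subst_beta_liftSub.
    apply IHt; simpl; split; auto; apply ApproxSub_wk; auto.
  - pose proof (IHt1 _ _ _ Happrox D0 (idWk D0) _ _ (IHt2 _ _ _ Happrox)) as Happ.
    rewrite wkTm_idWk in Happ; exact Happ.
  - simpl; eapply Approx_conv; [apply beta_box |]; simpl.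
    change (wkeepL (idWk D0)) with (idWk (clock D0)); rewrite wkTm_idWk.
    apply IHt; simpl; exists s; auto.
  - change (eval (unbox t r) D0 rho) with (boxElimNT (eval t) D0 (evalRel r D0 rho)).
    pose proof (ApproxSub_factorSub r _ _ Happrox) as Hfactor.
    destruct (evalRel r D0 rho) as [D1 r1 e1].
    destruct Hfactor as [s1 [Hs1 Happrox1]]; simpl; rewrite Hs1; simpl.
    pose proof (Approx_wk _ _ (factor e1) (IHt _ _ _ Happrox1)) as Hwk; simpl in Hwk.
    rewrite factorWk_factor, wkTm_idWk in Hwk; exact Hwk.
Qed.

Fixpoint idEnv (G : Ctx) : Env G G :=
  match G as G return Env G G with
  | cnil => tt
  | cext G A =>
      (pshWk (Env G) (wdrop A (idWk G)) (idEnv G), reflect (reifyReflect A) (var (vz G A)))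
  | clock G => lockIn (idEnv G) (r_nil G)
  end.

Lemma ApproxSub_idSub G : ApproxSub G (idSub G) (idEnv G).
Proof.
  induction G; simpl.
  - exact I.
  - split; [apply ApproxSub_wk, IHG | apply (proj1 (Approx_reflect_reify t))].
  - exists (idSub G); auto.
Qed.

Definition nbe G A (t : Tm G A) : Tm G A := reify (reifyReflect A) (eval t G (idEnv G)).

Lemma Conv_nbe G A (t : Tm G A) : Conv t (nbe t).
Proof.
  pose proof (Approx_subst_eval t _ _ (ApproxSub_idSub G)) as Happrox.
  rewrite subst_idSub in Happrox.
  exact (proj2 (Approx_reflect_reify A) G t _ Happrox).
Qed.

Theorem theorem5 (G : Ctx) (A : Ty) (t u : Tm G A) :
  (forall (M : CCC) (F : Adj M) (io : Obj M),
      @semTm M F io G A t = @semTm M F io G A u) ->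
  Conv t u.
Proof.
  intros Hsem.
  assert (Hnbe : nbe t = nbe u) by (unfold nbe, eval; rewrite Hsem; reflexivity).
  eapply conv_trans; [apply Conv_nbe |].
  rewrite Hnbe; apply conv_sym, Conv_nbe.
Qed.
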